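(* Let $\{\mu_t\}_{t\in[0,T]}$ be the limit family from the definition of approximative solutions below, with $\rho_t$ its $x$-marginal and $M$ the uniform velocity bound. Then $\{\mu_t\}$ is locally mass preserving: for every set $C\subset\mathbb{R}^d$ and all $0\le t_0\le t\le T$, $$\rho_t\big(\overline{C}+(t-t_0)\overline{B(M)}\big)\ge\rho_{t_0}(C).$$
   Context: Setting: $T>0$, $\alpha\in[1,2]$, $d\ge1$, $\psi(s)=s^{-\alpha}$; $\overline{S}$ denotes closure and $+$ the Minkowski sum. Particle system: $\dot x_i=v_i$, $\dot v_i=\frac1N\sum_{j\ne i}\psi(|x_i-x_j|)(v_j-v_i)$ (unique smooth non-collisional global solutions for distinct initial positions). Atomic solution: $\mu^N_t=\frac1N\sum_i\delta_{x_i^N(t)}\otimes\delta_{v_i^N(t)}$, $\mu^N=\mu^N_t\otimes\lambda^1(t)$, where $\mu=\mu_t\otimes\lambda^1(t)$ means $\int g\,d\mu=\int_0^T\int g(t,\cdot)d\mu_t\,dt$. $E[\mu_t]=\int|v|^2d\mu_t$. Approximative solutions: given compactly supported $\rho_0\in\mathcal{P}(\mathbb{R}^d)$ and $u_0\in L^\infty(\rho_0;\mathbb{R}^d)$, for each $N$ take initial data $(x_{i0}^N,v_{i0}^N)_{i=1}^N$ with pairwise distinct $x_{i0}^N$ such that $\frac1N\sum_i\delta_{x_{i0}^N}\rightharpoonup\rho_0$ and $\frac1N\sum_iv_{i0}^N\delta_{x_{i0}^N}\rightharpoonup u_0\rho_0$ narrowly, with all $\mu^N_t$ supported in $(T+1)B(M)\times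 B(M)$ for a fixed $M$ (so $|v_i^N(t)|<M$); let $\mu^N$ be the associated atomic solutions, and pass to a subsequence (not relabeled) such that: $\mu^N\rightharpoonup\mu=\mu_t\otimes\lambda^1(t)$ narrowly; $[\mu^N_t\otimes\mu^N_t]\otimes\lambda^1(t)\rightharpoonup[\mu_t\otimes\mu_t]\otimes\lambda^1(t)$ narrowly; $\rho^N_t:=\int_{\mathbb{R}^d_v}d\mu^N_t\to\rho_t$ in $C([0,T];(\mathcal{M}_+(\mathbb{R}^d),d_{BL}))$, where $\rho_t$ is the $x$-marginal of $\mu_t$; and $E[\mu^N_t]\to E[\mu_t]$ for all $t$ in a full-measure set $A_E$. $B(r)$ is the open ball of radius $r$ at $0$ and $d_{BL}$ the bounded-Lipschitz distance. *)

From HB Require Import structures.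
From mathcomp Require Import all_boot all_order all_algebra.
From mathcomp Require Import all_classical all_reals all_analysis.
From mathcomp Require Import measurable_realfun.
Set Implicit Arguments. Unset Strict Implicit. Unset Printing Implicit Defensive.
Import Order.TTheory GRing.Theory Num.Theory.
Import numFieldNormedType.Exports.
Local Open Scope classical_set_scope.
Local Open Scope ring_scope.

(* Points of R^d are row vectors 'rV[R]_d (library topology = usual one). *)

(* Euclidean norm on R^d (the library norm on 'rV is the max norm). *)
Definition enorm (R : realType) (d : nat) (v : 'rV[R]_d) : R :=
  Num.sqrt (\sum_(k < d) v ord0 k ^+ 2).

Definition eball (R : realType) (d : nat) (r : R) : set 'rV[R]_d :=
  [set v | enorm v < r].

Definition setMsum (R : realType) (d : nat) (A B : set 'rV[R]_d)
  : set 'rV[R]_d := [set a + b | a in A & b in B].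

Definition Rd (R : realType) (d : nat) :=
  g_sigma_algebraType (@open 'rV[R]_d).

Definition Phase (R : realType) (d : nat) := (Rd R d * Rd R d)%type.

(* f : R^d -> R with sup|f| <= 1 and Lip(f) <= 1 (Euclidean distance):
   the test functions in the bounded-Lipschitz distance. *)
Definition BL1 (R : realType) (d : nat) (f : 'rV[R]_d -> R) : Prop :=
  (forall x, `|f x| <= 1) /\
  (forall x y, `|f x - f y| <= enorm (x - y)).

(* d_BL(nu1, nu2) <= e, where nu1 is given through its integral functional. *)
Definition dBL_le (R : realType) (d : nat)
  (I1 : ('rV[R]_d -> R) -> \bar R) (I2 : ('rV[R]_d -> R) -> \bar R) (e : R)
  : Prop :=
  forall f, BL1 f -> (`| I1 f - I2 f | <= e%:E)%E.

Definition bcont (R : realType) (X : topologicalType) (D : set X) (g : X -> R)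
  : Prop :=
  {within D, continuous g} /\ exists C : R, forall p, D p -> `|g p| <= C.

Definition I0T (R : realType) (T : R) : set R := `[0, T].

From HB Require Import structures.
From mathcomp Require Import all_boot all_order all_algebra.
From mathcomp Require Import all_classical all_reals all_analysis.
From mathcomp Require Import measurable_realfun.
From mathcomp Require Import ring lra.
Import Order.TTheory GRing.Theory Num.Theory.
Import numFieldNormedType.Exports.
Local Open Scope classical_set_scope.
Local Open Scope ring_scope.
Set Implicit Arguments. Unset Strict Implicit. Unset Printing Implicit Defensive.

(* Particles move with speed < M, so on [t0, t] each one is displaced by a
   vector of S := (t - t0) B(M)-bar (mean value theorem along the direction
   of the displacement, with Cauchy-Schwarz for the Euclidean norm).  Hence
   for test functions F, G with F y <= G (y + w) for all w in S, the
   empirical averages satisfy <F, rho^N_t0> <= <G, rho^N_t>, and the uniform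
   d_BL convergence rho^N -> rho transfers this to <F, rho_t0> <= <G, rho_t>
   when F, G are bounded-Lipschitz.

   The measure-theoretic core is independent of the particles: testing with
   the tent functions of height e around C and around C + S gives
   e rho_t0(C) <= e rho_t(dist(., C + S) < e); letting e -> 0 the sublevel
   sets decrease to closure C + S (S being compact), and rho_t is finite. *)

Section EuclideanNorm.
Variables (R : realType) (d : nat).
Implicit Types (c u w : 'rV[R]_d).

Definition dotr c w : R := \sum_k c ord0 k * w ord0 k.

Lemma sqr_sum_ge0 w : 0 <= \sum_k w ord0 k ^+ 2.
Proof. by apply: sumr_ge0 => k _; exact: sqr_ge0. Qed.

Lemma enorm_ge0 w : 0 <= enorm w.
Proof. exact: sqrtr_ge0. Qed.

Lemma dotr_self w : dotr w w = enorm w ^+ 2.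
Proof. by rewrite /enorm sqr_sqrtr ?sqr_sum_ge0 //; apply: eq_bigr => k _; rewrite expr2. Qed.

Lemma enormZ a w : enorm (a *: w) = `|a| * enorm w.
Proof.
rewrite /enorm (eq_bigr (fun k => a ^+ 2 * w ord0 k ^+ 2)); last first.
  by move=> k _; rewrite mxE exprMn.
by rewrite -mulr_sumr sqrtrM ?sqr_ge0 // sqrtr_sqr.
Qed.

Lemma enorm0 : enorm (0 : 'rV[R]_d) = 0.
Proof. by rewrite -(scale0r 0) enormZ normr0 mul0r. Qed.

Lemma enorm_eq0 w : enorm w = 0 -> w = 0.
Proof.
move/eqP; rewrite sqrtr_eq0 => le0.
have S0 : \sum_k w ord0 k ^+ 2 = 0 by apply/eqP; rewrite eq_le le0 sqr_sum_ge0.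
apply/rowP => k; apply/eqP; rewrite mxE -sqrf_eq0; apply/eqP.
by apply: (psumr_eq0P _ S0) => // i _; exact: sqr_ge0.
Qed.

Lemma norm_le_enorm w : `|w| <= enorm w.
Proof.
rewrite [leLHS]/Num.Def.normr /= mx_normrE; apply/bigmax_leP; split=> [|[i k] _ /=].
  exact: enorm_ge0.
rewrite ord1 /enorm -sqrtr_sqr ler_sqrt ?sqr_sum_ge0 //.
by rewrite (bigD1 k) //= lerDl sumr_ge0 // => j _; exact: sqr_ge0.
Qed.

Lemma dotrC c w : dotr c w = dotr w c.
Proof. by apply: eq_bigr => k _; rewrite mulrC. Qed.

Lemma dot0r w : dotr 0 w = 0.
Proof. by rewrite /dotr big1 // => k _; rewrite mxE mul0r. Qed.

(* Cauchy-Schwarz: expand 0 <= |B c - A w|^2 where A = |c|, B = |w|. *)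
Lemma cauchy_schwarz c w : dotr c w <= enorm c * enorm w.
Proof.
have [/enorm_eq0->|A0] := eqVneq (enorm c) 0; first by rewrite dot0r enorm0 mul0r.
have [/enorm_eq0->|B0] := eqVneq (enorm w) 0.
  by rewrite dotrC dot0r enorm0 mulr0.
set A := enorm c; set B := enorm w.
have AB0 : 0 < A * B by rewrite mulr_gt0 // lt_def ?A0 ?B0 enorm_ge0.
have expand : \sum_k (B * c ord0 k - A * w ord0 k) ^+ 2
    = B ^+ 2 * dotr c c - 2 * (A * B) * dotr c w + A ^+ 2 * dotr w w.
  rewrite /dotr !mulr_sumr -sumrB -big_split /=; apply: eq_bigr => k _; ring.
rewrite !dotr_self -/A -/B in expand.
have : 0 <= 2 * (A * B) * (A * B - dotr c w).
  have -> : 2 * (A * B) * (A * B - dotr c w) = \sum_k (B * c ord0 k - A * w ord0 k) ^+ 2.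
    by rewrite expand; ring.
  by rewrite sumr_ge0 // => k _; exact: sqr_ge0.
by move=> h; rewrite -subr_ge0; move: h; rewrite pmulr_rge0 // mulr_gt0.
Qed.

End EuclideanNorm.

Section LinearDerivative.
Variables (R : realType) (V W : normedModType R).

Lemma is_derive_linear (L : {linear V -> W}) (f : R -> V) (s : R) (df : V) :
  continuous L -> is_derive s 1 f df -> is_derive s 1 (L \o f) (L df).
Proof.
move=> Lc [fd <-].
have quotient_cvg : (fun h : R => h^-1 *: ((f \o shift s) (h *: 1) - f s)) @ 0^'
    --> 'D_1 f s by exact: fd.
have LE : (fun h : R => h^-1 *: (((L \o f) \o shift s) (h *: 1) - (L \o f) s))
    = L \o (fun h : R => h^-1 *: ((f \o shift s) (h *: 1) - f s)).
  by rewrite funeqE => h /=; rewrite [RHS]linearZ [in RHS]linearB.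
have Lq : (L \o (fun h : R => h^-1 *: ((f \o shift s) (h *: 1) - f s))) @ 0^'
    --> L ('D_1 f s) by exact: continuous_cvg (Lc _) quotient_cvg.
apply: DeriveDef; first by rewrite /derivable LE; exact: cvgP Lq.
by rewrite /derive LE; exact: cvg_lim Lq.
Qed.

End LinearDerivative.

Section Displacement.
Variables (R : realType) (d : nat).

Lemma dotr_is_linear (c : 'rV[R]_d) : linear (dotr c).
Proof.
move=> a u w; rewrite /dotr scaler_sumr -big_split /=.
by apply: eq_bigr => k _; rewrite !mxE /GRing.scale /=; ring.
Qed.

HB.instance Definition _ (c : 'rV[R]_d) :=
  GRing.isLinear.Build R 'rV[R]_d R _ (dotr c) (dotr_is_linear c).

Lemma dotr_continuous (c : 'rV[R]_d) : continuous (dotr c).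
Proof.
move=> w0; have coord_cvg k : c ord0 k * w ord0 k @[w --> w0] --> c ord0 k * w0 ord0 k.
  exact: (@cvgMl_tmp _ _ (nbhs w0) _ (fun w : 'rV[R]_d => w ord0 k) _ _
           (@coord_continuous R 1 d ord0 k w0)).
have add_cont : continuous (fun p : R * R => p.1 + p.2).
  exact: (@pseudometric_normed_Zmodule.add_continuous R R^o).
exact: (@cvg_big _ _ +%R 0 _ add_cont _ (nbhs w0) (index_enum _)
  (fun k w => c ord0 k * w ord0 k) _ _ (fun k _ => coord_cvg k)).
Qed.

(* A trajectory whose speed stays below M moves less than (t - t0) M: the
   mean value theorem applied to the projection of x on its displacement. *)
Lemma displacement_lt (x v : R -> 'rV[R]_d) (M t0 t : R) :
  {within `[0, +oo[, continuous x} ->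
  (forall s : R, 0 < s -> is_derive s 1 x (v s)) ->
  (forall s : R, t0 <= s <= t -> enorm (v s) < M) ->
  0 <= t0 -> t0 < t ->
  enorm (x t - x t0) < (t - t0) * M.
Proof.
move=> x_cont x_der v_lt t0_ge0 t0t.
have dt_gt0 : 0 < t - t0 by rewrite subr_gt0.
have M_gt0 : 0 < M.
  by apply: le_lt_trans (v_lt t0 _); [exact: enorm_ge0|rewrite lexx ltW].
set D := x t - x t0.
have [D0|D_gt0] := eqVneq (enorm D) 0; first by rewrite D0 mulr_gt0.
have {}D_gt0 : 0 < enorm D by rewrite lt_def D_gt0 enorm_ge0.
have proj_der s : s \in `]t0, t[ -> is_derive s 1 (dotr D \o x) (dotr D (v s)).
  rewrite in_itv /= => /andP[t0s _]; apply: is_derive_linear.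
    exact: dotr_continuous.
  by apply: x_der; exact: le_lt_trans t0s.
have proj_cont : {within `[t0, t], continuous (dotr D \o x)}.
  have sub : `[t0, t] `<=` `[0, +oo[.
    by move=> r /=; rewrite !in_itv /= andbT => /andP[t0r _]; exact: le_trans t0r.
  move=> r; apply: continuous_cvg; first exact: dotr_continuous.
  exact: (continuous_subspaceW sub x_cont).
have [c /[!in_itv] /= /andP[t0c ct]] := MVT t0t proj_der proj_cont.
rewrite /= -linearB -/D -[X in X = _]/(dotr D D) dotr_self => D2.
have : enorm D ^+ 2 < enorm D * M * (t - t0).
  rewrite D2 ltr_pM2r //; apply: le_lt_trans (cauchy_schwarz _ _) _.
  by rewrite ltr_pM2l // v_lt // !ltW.
by rewrite expr2 -mulrA ltr_pM2l // mulrC.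
Qed.

End Displacement.

Section DistanceToSet.
Variables (R : realType) (V : normedModType R) (A : set V).
Hypothesis A0 : A !=set0.
Implicit Types (y z : V).

Definition dist_set y : R := inf [set `|y - a| | a in A].

Lemma dist_set_ge r y : (forall a, A a -> r <= `|y - a|) -> r <= dist_set y.
Proof.
move=> r_lb; apply: lb_le_inf; first by case: A0 => a Aa; exists `|y - a|, a.
by move=> _ [a Aa <-]; exact: r_lb.
Qed.

Lemma dist_set_ge0 y : 0 <= dist_set y.
Proof. by apply: dist_set_ge => a _; exact: normr_ge0. Qed.

Lemma dist_set_le a y : A a -> dist_set y <= `|y - a|.
Proof.
move=> Aa; apply: ge_inf; last by exists a.
by exists 0 => _ [b _ <-]; exact: normr_ge0.
Qed.

Lemma dist_set_lipschitz y z : `|dist_set y - dist_set z| <= `|y - z|.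
Proof.
suff dist_le u w : dist_set u <= dist_set w + `|u - w|.
  have := dist_le y z; have := dist_le z y; rewrite distrC ler_norml; lra.
rewrite -lerBlDr; apply: dist_set_ge => a Aa; rewrite lerBlDr.
apply: le_trans (dist_set_le u Aa) _.
have -> : u - a = (u - w) + (w - a) by rewrite addrA subrK.
by rewrite addrC ler_normD.
Qed.

Lemma dist_set_le0 y : dist_set y <= 0 <-> closure A y.
Proof.
split=> [dist0 B /nbhs_ballP[e e_gt0 yeB] | clAy].
  have : inf [set `|y - a| | a in A] < e by exact: le_lt_trans dist0 e_gt0.
  case/inf_lt; first by case: A0 => a Aa; exists `|y - a|, a.
  move=> _ [a Aa <-] yae; exists a; split=> //; apply: yeB.
  by rewrite -ball_normE /ball_ /=.
rewrite leNgt; apply/negP => dist_gt0.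
have [a [Aa]] := clAy (ball y (dist_set y)) (nbhsx_ballx _ _ dist_gt0).
rewrite -ball_normE /ball_ /= => ya_lt.
by have := dist_set_le y Aa; rewrite leNgt ya_lt.
Qed.

End DistanceToSet.

Section Lipschitz.
Variables (R : realType) (V : normedModType R).

Lemma lipschitz_continuous (f : V -> R) :
  (forall y z, `|f y - f z| <= `|y - z|) -> continuous f.
Proof.
move=> f_lip z; apply/cvgrPdist_lt => e e_gt0.
near=> y; apply: le_lt_trans (f_lip z y) _; near: y.
by apply: cvgr_dist_lt => //; exact: cvg_id.
Unshelve. all: by end_near.
Qed.

Lemma dist_set_continuous (A : set V) : A !=set0 -> continuous (dist_set A).
Proof. by move=> A0; apply: lipschitz_continuous; exact: dist_set_lipschitz. Qed.

End Lipschitz.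

Section MinkowskiDistance.
Variables (R : realType) (d : nat) (C S : set 'rV[R]_d).
Hypothesis C0 : C !=set0.

Lemma dist_Msum_shift y w : S w -> dist_set (setMsum C S) (y + w) <= dist_set C y.
Proof.
move=> Sw; apply: dist_set_ge => // c Cc.
have CSne : setMsum C S !=set0 by exists (c + w), c => //; exists w.
apply: le_trans (dist_set_le _ _) _; first by exists c => //; exists w.
by rewrite opprD addrACA subrr addr0.
Qed.

Hypotheses (S0 : S !=set0) (S_compact : compact S).

(* For compact S, C + S has closure (closure C) + S: the zero set of the
   distance is attained at a nearest point of the compact S. *)
Lemma dist_Msum_le0 y : dist_set (setMsum C S) y <= 0 <-> setMsum (closure C) S y.
Proof.
have CSne : setMsum C S !=set0.
  by case: C0 S0 => c Cc [w Sw]; exists (c + w), c => //; exists w.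
split=> [dist0|[k clCk [b Sb <-]]]; last first.
  by apply: le_trans (dist_Msum_shift _ Sb) _; exact/dist_set_le0.
have shift_cont : {within S, continuous (fun b => dist_set C (y - b))}.
  apply: continuous_subspaceT; apply: lipschitz_continuous => b1 b2.
  apply: le_trans (dist_set_lipschitz C0 _ _) _.
  by rewrite opprB addrC addrA subrK distrC.
have [b /[!inE] Sb b_min] := EVT_min_rV S0 S_compact shift_cont.
have : dist_set C (y - b) <= dist_set (setMsum C S) y.
  apply: dist_set_ge => // _ [c Cc [b' Sb' <-]].
  apply: le_trans (b_min b' _) _; first by rewrite inE.
  by apply: le_trans (dist_set_le _ Cc) _; rewrite opprD addrA [y - c - b']addrAC.
move=> /le_trans/(_ dist0)/(dist_set_le0 C0) clC.
by exists (y - b) => //; exists b => //; rewrite subrK.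
Qed.

End MinkowskiDistance.

Section Cutoff.
Variables (R : realType) (V : normedModType R) (e : R) (A : set V).
Hypotheses (A0 : A !=set0) (e_ge0 : 0 <= e).

Definition cutoff (y : V) : R := Num.max 0 (e - dist_set A y).

Lemma cutoff_ge0 y : 0 <= cutoff y.
Proof. by rewrite le_max lexx. Qed.

Lemma cutoff_le y : cutoff y <= e.
Proof. by rewrite ge_max e_ge0 gerBl dist_set_ge0. Qed.

Lemma cutoff_on y : A y -> cutoff y = e.
Proof.
move=> Ay; apply/eqP; rewrite eq_le cutoff_le le_max lerBrDr gerDl orbC.
by have := dist_set_le y Ay; rewrite subrr normr0 => ->.
Qed.

Lemma cutoff_le_indic y : cutoff y <= e * \1_[set z | dist_set A z < e] y.
Proof.
rewrite /indic; case: (boolP (y \in _)) => [_|]; first by rewrite mulr1 cutoff_le.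
rewrite notin_setE /= => /negP; rewrite -leNgt mulr0 => e_le.
by rewrite ge_max lexx subr_le0.
Qed.

(* Truncating at 0 preserves the 1-Lipschitz property of the distance. *)
Lemma cutoff_lipschitz y z : `|cutoff y - cutoff z| <= `|y - z|.
Proof.
apply: le_trans (dist_set_lipschitz A0 y z); rewrite /cutoff.
move: (dist_set A y) (dist_set A z) => a b.
have := ler_norm (a - b); have := ler_norm (b - a); rewrite (distrC b).
rewrite ler_norml !maxEle.
by case: ifP => ha; case: ifP => hb /= ? ?; apply/andP; split; lra.
Qed.

End Cutoff.

Lemma cutoff_mono (R : realType) (V : normedModType R) (e : R) (A B : set V) y z :
  dist_set B z <= dist_set A y -> cutoff e A y <= cutoff e B z.
Proof. by move=> le_dist; rewrite ge_max le_max lexx le_max lerB ?orbT. Qed.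

Section BorelRd.
Variables (R : realType) (d : nat).

Lemma open_measurable_Rd (A : set 'rV[R]_d) : open A -> measurable (A : set (Rd R d)).
Proof. by move=> oA; apply: sub_sigma_algebra. Qed.

Lemma continuous_measurable_Rd (f : 'rV[R]_d -> R) :
  continuous f -> measurable_fun (setT : set (Rd R d)) (fun y => (f y)%:E).
Proof.
move=> f_cont; apply/measurable_EFinP.
apply: (measurability _ (RGenOpens.measurableE R)) => _ [_ [a [b ->] <-]].
rewrite setTI; apply: open_measurable_Rd.
by move/continuousP: f_cont; apply; exact: interval_open.
Qed.

Lemma cutoff_BL1 (e : R) (A : set 'rV[R]_d) :
  A !=set0 -> 0 <= e <= 1 -> BL1 (cutoff e A).
Proof.
move=> A0 /andP[e_ge0 e_le1]; split=> [y|y z].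
  by rewrite ger0_norm ?cutoff_ge0 // (le_trans (cutoff_le _ _ _)).
exact: le_trans (cutoff_lipschitz _ _ _ _) (norm_le_enorm _).
Qed.

Lemma dist_sublevel_measurable (A : set 'rV[R]_d) (e : R) :
  A !=set0 -> measurable ([set y | dist_set A y < e] : set (Rd R d)).
Proof.
move=> A0; apply: open_measurable_Rd; rewrite -[X in open X]/(dist_set A @^-1` `]-oo, e[).
by apply: open_comp => [y _|]; [exact: dist_set_continuous|exact: interval_open].
Qed.

End BorelRd.

Section IntegralBounds.
Variables (dT : measure_display) (T : measurableType dT) (R : realType).
Variables (mu : {measure set T -> \bar R}) (f : T -> R) (e : R).
Hypotheses (f_meas : measurable_fun setT (fun y => (f y)%:E)) (f_ge0 : forall y, 0 <= f y).
Hypothesis e_ge0 : 0 <= e.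

Lemma mass_le_integral (A : set T) :
  measurable A -> (forall y, A y -> e <= f y) -> (e%:E * mu A <= \int[mu]_y (f y)%:E)%E.
Proof.
move=> mA f_geA; rewrite -integral_cst //.
apply: (@le_trans _ _ (\int[mu]_(y in A) (f y)%:E)%E).
  by apply: ge0_le_integral => //; exact: measurable_funS f_meas.
by apply: ge0_subset_integral => // y _; rewrite lee_fin.
Qed.

Lemma integral_le_mass (U : set T) :
  measurable U -> (forall y, f y <= e * \1_U y) -> (\int[mu]_y (f y)%:E <= e%:E * mu U)%E.
Proof.
move=> mU f_leU.
apply: (@le_trans _ _ (\int[mu]_y (e * \1_U y)%:E)%E).
  apply: ge0_le_integral => //.
  - by move=> y _; rewrite lee_fin.
  - by apply/measurable_EFinP; apply: measurable_funM => //; exact: measurable_indic.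
  - by move=> y _; rewrite lee_fin.
rewrite (integralZl_indic _ (fun=> U)) //; last by rewrite ltNge e_ge0.
by rewrite integral_indic // setIT.
Qed.

End IntegralBounds.

Section ScaledBall.
Variables (R : realType) (d : nat) (M : R).

(* s B(M)-bar: the set of displacements of speed < M during a time s. *)
Definition scaled_ball (s : R) : set 'rV[R]_d :=
  [set s *: b | b in closure (@eball R d M)].

(* The closed Euclidean ball is bounded (in max norm) and closed. *)
Lemma closed_eball_compact : compact (closure (@eball R d M)).
Proof.
apply: bounded_closed_compact; last exact: closed_closure.
suff sub : closure (@eball R d M) `<=` [set v | `|v| <= M].
  exists M; split; first exact: num_real.
  by move=> M' M'_gt v /sub; rewrite /= => /le_trans; apply; exact: ltW.
move=> v clv; have [M_le0|M_gt0] := leP M 0.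
  case: (clv _ (nbhsx_ballx v 1 ltr01)) => w [/= w_lt _].
  by have := le_lt_trans (enorm_ge0 w) w_lt; rewrite ltNge M_le0.
have : closed_ball (0 : 'rV[R]_d) M v.
  apply: (closureS _ clv) => w /= w_lt; rewrite -ball_normE /ball_ /= sub0r normrN.
  exact: le_lt_trans (norm_le_enorm w) w_lt.
by rewrite closed_ballE // /closed_ball_ /= sub0r normrN.
Qed.

Lemma scaled_ball_compact s : compact (scaled_ball s).
Proof.
apply: continuous_compact; last exact: closed_eball_compact.
by apply: continuous_subspaceT; exact: scaler_continuous.
Qed.

Lemma scaled_ball0 s : 0 < M -> scaled_ball s 0.
Proof.
move=> M_gt0; exists 0; last by rewrite scaler0.
by apply: subset_closure; rewrite /eball /= enorm0.
Qed.

Lemma displacement_in_ball (x v : R -> 'rV[R]_d) (t0 t : R) :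
  {within `[0, +oo[, continuous x} ->
  (forall s : R, 0 < s -> is_derive s 1 x (v s)) ->
  (forall s : R, t0 <= s <= t -> enorm (v s) < M) ->
  0 <= t0 -> t0 <= t -> scaled_ball (t - t0) (x t - x t0).
Proof.
move=> x_cont x_der v_lt t0_ge0 t0_le_t.
have M_gt0 : 0 < M.
  by apply: le_lt_trans (v_lt t0 _); rewrite ?enorm_ge0 ?lexx.
have := t0_le_t; rewrite le_eqVlt => /orP[/eqP<-|t0t].
  by rewrite !subrr; exact: scaled_ball0.
have dt_gt0 : 0 < t - t0 by rewrite subr_gt0.
exists ((t - t0)^-1 *: (x t - x t0)); last by rewrite scalerA mulfV ?gt_eqF ?scale1r.
apply: subset_closure; rewrite /eball /= enormZ gtr0_norm ?invr_gt0 //.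
rewrite mulrC ltr_pdivrMr // mulrC.
exact: displacement_lt.
Qed.

End ScaledBall.

Lemma le0_of_lt_invn (R : realType) (p : R) : (forall n : nat, p < n.+1%:R^-1) -> p <= 0.
Proof.
move=> p_lt; rewrite leNgt; apply/negP => p_gt0.
have := p_lt (Num.truncn p^-1); rewrite ltNge => /negP; apply.
rewrite -[leRHS](invrK p) lef_pV2 ?posrE ?invr_gt0 ?ltr0Sn //.
exact/ltW/truncnS_gt.
Qed.

Section LocalMassTransport.
Variables (R : realType) (d : nat).
Variables (rho0 rho1 : {measure set (Rd R d) -> \bar R}) (S : set 'rV[R]_d).
Hypotheses (S0 : S !=set0) (S_compact : compact S).
Hypothesis rho1_fin : (rho1 setT < +oo)%E.

(* rho1 dominates rho0 transported by displacements in S, in duality with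
   bounded-Lipschitz test functions. *)
Hypothesis transport : forall F G : 'rV[R]_d -> R, BL1 F -> BL1 G ->
  (forall y w, S w -> F y <= G (y + w)) ->
  (\int[rho0]_y (F y)%:E <= \int[rho1]_y (G y)%:E)%E.

Variable C : set 'rV[R]_d.
Hypotheses (C0 : C !=set0) (C_meas : measurable (C : set (Rd R d))).

Let CS0 : setMsum C S !=set0.
Proof. by case: C0 S0 => c Cc [w Sw]; exists (c + w), c => //; exists w. Qed.

(* Testing with the cutoffs of height e of C and of C + S. *)
Lemma mass_le_neighbourhood e : 0 < e <= 1 ->
  (rho0 C <= rho1 [set y | (dist_set (setMsum C S) y < e)%R])%E.
Proof.
move=> /andP[e_gt0 e_le1]; have e_ge0 := ltW e_gt0.
have e01 : 0 <= e <= 1 by rewrite e_ge0.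
pose F := cutoff e C; pose G := cutoff e (setMsum C S).
have F_le_G y w : S w -> F y <= G (y + w).
  by move=> Sw; apply: cutoff_mono; exact: dist_Msum_shift.
have F_meas := continuous_measurable_Rd (lipschitz_continuous (cutoff_lipschitz e C0)).
have G_meas := continuous_measurable_Rd (lipschitz_continuous (cutoff_lipschitz e CS0)).
have lb : (e%:E * rho0 C <= \int[rho0]_y (F y)%:E)%E.
  apply: mass_le_integral => //; first exact: cutoff_ge0.
  by move=> y Cy; rewrite /F cutoff_on.
have ub : (\int[rho1]_y (G y)%:E <= e%:E * rho1 [set y | (dist_set (setMsum C S) y < e)%R])%E.
  apply: integral_le_mass => //; [exact: cutoff_ge0|exact: dist_sublevel_measurable|].
  exact: cutoff_le_indic.
have := le_trans lb (le_trans (transport (cutoff_BL1 C0 e01) (cutoff_BL1 CS0 e01) F_le_G) ub).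
by rewrite lee_pmul2l ?lte_fin.
Qed.

(* Letting e -> 0: the neighbourhoods decrease to (closure C) + S. *)
Lemma mass_le_Msum : (rho0 C <= rho1 (setMsum (closure C) S))%E.
Proof.
pose U n := [set y : Rd R d | dist_set (setMsum C S) y < n.+1%:R^-1].
have U_meas n : measurable (U n) by exact: dist_sublevel_measurable.
have capU : setMsum (closure C) S = \bigcap_n U n.
  apply/seteqP; split=> y.
    move=> /(dist_Msum_le0 C0 S0 S_compact) y0 n _.
    by apply: le_lt_trans y0 _; rewrite invr_gt0.
  by move=> Uy; apply/(dist_Msum_le0 C0 S0 S_compact)/le0_of_lt_invn => n; exact: Uy.
have U_decr : {homo U : m n / (m <= n)%N >-> (n <= m)%O}.
  move=> m n mn; apply/subsetPset => y; rewrite /U /= => y_lt.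
  by apply: lt_le_trans y_lt _; rewrite lef_pV2 ?posrE ?ltr0Sn // ler_nat.
have U0_fin : (rho1 (U 0%N) < +oo)%E.
  by apply: le_lt_trans rho1_fin; apply: le_measure; rewrite ?inE.
have := nonincreasing_cvg_mu U0_fin U_meas (bigcapT_measurable U_meas) U_decr.
rewrite -capU => cvg_U; rewrite -(cvg_lim _ cvg_U) //.
apply: lime_ge; first exact: cvgP cvg_U.
apply: nearW => n /=; apply: mass_le_neighbourhood.
by rewrite invr_gt0 ltr0Sn invf_le1 ?ler1n.
Qed.

End LocalMassTransport.

Lemma le_of_close (R : realType) (a b e : R) (I1 I2 : \bar R) :
  (`|a%:E - I1| <= e%:E)%E -> (`|b%:E - I2| <= e%:E)%E -> a <= b ->
  (I1 <= I2 + (e + e)%:E)%E.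
Proof.
case: I1 => [r1||]; case: I2 => [r2||] //=; rewrite ?leey ?leNye // !lee_fin.
move=> a_close b_close ab.
have := ler_norm (a - r1); have := ler_norm (r1 - a); rewrite distrC.
have := ler_norm (b - r2); have := ler_norm (r2 - b); rewrite (distrC r2).
lra.
Qed.

Unset Implicit Arguments.

Section EmpiricalLimit.
Variables (R : realType) (d : nat) (T : R).
Variables (x : forall n : nat, 'I_n.+1 -> R -> 'rV[R]_d) (sigma : nat -> nat).
Variable rho : R -> {measure set (Rd R d) -> \bar R}.

Hypothesis rho_unif : forall e : R, 0 < e -> \forall k \near \oo,
  forall t : R, 0 <= t <= T -> let n := sigma k in
  dBL_le (fun f => ((n.+1%:R)^-1 * \sum_(i < n.+1) f (x n i t))%:E)
         (fun f => \int[rho t]_y (f y)%:E)%E e.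

Lemma empirical_le_limit (F G : 'rV[R]_d -> R) (t0 t : R) :
  0 <= t0 <= T -> 0 <= t <= T -> BL1 F -> BL1 G ->
  (forall n i, F (x n i t0) <= G (x n i t)) ->
  (\int[rho t0]_y (F y)%:E <= \int[rho t]_y (G y)%:E)%E.
Proof.
move=> t0T tT BF BG FG; apply/lee_addgt0Pr => e e_gt0.
have e2_gt0 : 0 < e / 2 by rewrite divr_gt0.
have [N _ close] := rho_unif _ e2_gt0.
have /= dBL_N := close N (leqnn N).
rewrite (splitr e); apply: le_of_close (dBL_N t0 t0T F BF) (dBL_N t tT G BG) _.
rewrite ler_wpM2l ?invr_ge0 //; apply: ler_sum => i _; exact: FG.
Qed.

End EmpiricalLimit.

Arguments empirical_le_limit [R d T x sigma rho] rho_unif [F G t0 t].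

Theorem mainTheorem10
  (R : realType) (d : nat) (T alpha M : R)
  (* particle system with N = n.+1 particles: positions / velocities *)
  (x v : forall n : nat, 'I_n.+1 -> R -> 'rV[R]_d)
  (rho0 : probability (Rd R d) R) (u0 : Rd R d -> Rd R d)
  (sigma : nat -> nat)
  (mu : R -> probability (Phase R d) R)
  (rho : R -> {measure set (Rd R d) -> \bar R}) :
  (0 < d)%N -> 0 < T -> 1 <= alpha <= 2 ->
  (* global smooth non-collisional solutions of the particle system *)
  (forall n i, {within `[0, +oo[, continuous (x n i)}) ->
  (forall n i, {within `[0, +oo[, continuous (v n i)}) ->
  (forall n i j (t : R), 0 <= t -> i != j -> x n i t != x n j t) ->
  (forall n i (t : R), 0 < t ->
     is_derive t 1 (x n i) (v n i t) /\
     is_derive t 1 (v n i)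
       ((n.+1%:R)^-1 *: \sum_(j < n.+1 | j != i)
            (enorm (x n i t - x n j t) `^ (- alpha)) *: (v n j t - v n i t))) ->
  (* rho0 compactly supported, u0 in L^infty(rho0; R^d) *)
  (exists K : set 'rV[R]_d, compact K /\ measurable (K : set (Rd R d)) /\
       rho0 (~` K) = 0%E) ->
  measurable_fun setT u0 ->
  (exists C : R, {ae rho0, forall y, enorm (u0 y) <= C}) ->
  (* narrow convergence of the initial empirical data *)
  (forall phi : 'rV[R]_d -> R, bcont setT phi ->
     (fun n => ((n.+1%:R)^-1 * \sum_(i < n.+1) phi (x n i 0))%:E) @ \oo
        --> (\int[rho0]_y (phi y)%:E)%E) ->
  (forall phi : 'rV[R]_d -> R, bcont setT phi -> forall k : 'I_d,
     (fun n => ((n.+1%:R)^-1 * \sum_(i < n.+1) phi (x n i 0) * v n i 0 ord0 k)%:E)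
        @ \oo --> (\int[rho0]_y (phi y * u0 y ord0 k)%:E)%E) ->
  (* uniform support bound: supp mu^N_t in (T+1)B(M) x B(M) *)
  (forall n i (t : R), 0 <= t <= T ->
     enorm (x n i t) < (T + 1) * M /\ enorm (v n i t) < M) ->
  (* the subsequence *)
  {homo sigma : m n / (m < n)%N} ->
  (* mu_t is a measurable family in t (mu = mu_t (x) lambda^1 is meaningful) *)
  (forall A : set (Phase R d), measurable A ->
     measurable_fun `[0, T] (fun t : R => mu t A)) ->
  (* narrow convergence mu^N -> mu on [0,T] x R^d x R^d *)
  (forall g : R * ('rV[R]_d * 'rV[R]_d) -> R,
     bcont [set p | p.1 \in `[0, T]] g ->
     (fun k => let n := sigma k in
        (\int[lebesgue_measure]_(t in I0T T)
           ((n.+1%:R)^-1 * \sum_(i < n.+1) g (t, (x n i t, v n i t)))%:E)%E)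
       @ \oo -->
     (\int[lebesgue_measure]_(t in I0T T)
        \int[mu t]_z (g (t, z))%:E)%E) ->
  (* narrow convergence [mu^N_t (x) mu^N_t] (x) lambda -> [mu_t (x) mu_t] (x) lambda *)
  (forall g : R * (('rV[R]_d * 'rV[R]_d) * ('rV[R]_d * 'rV[R]_d)) -> R,
     bcont [set p | p.1 \in `[0, T]] g ->
     (fun k => let n := sigma k in
        (\int[lebesgue_measure]_(t in I0T T)
           ((n.+1%:R)^-2 * \sum_(i < n.+1) \sum_(j < n.+1)
               g (t, ((x n i t, v n i t), (x n j t, v n j t))))%:E)%E)
       @ \oo -->
     (\int[lebesgue_measure]_(t in I0T T)
        \int[mu t]_z \int[mu t]_w
           (g (t, (z, w)))%:E)%E) ->
  (* rho_t is the x-marginal of mu_t *)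
  (forall (t : R) (A : set (Rd R d)), measurable A -> rho t A = mu t (A `*` setT)) ->
  (* rho^N -> rho in C([0,T]; (M_+(R^d), d_BL)) *)
  (forall t0 : R, 0 <= t0 <= T -> forall e : R, 0 < e -> exists2 delta : R, 0 < delta &
     forall t : R, 0 <= t <= T -> `|t - t0| < delta ->
       dBL_le (fun f => \int[rho t]_y (f y)%:E)%E
              (fun f => \int[rho t0]_y (f y)%:E)%E e) ->
  (forall e : R, 0 < e -> \forall k \near \oo, forall t : R, 0 <= t <= T ->
     let n := sigma k in
     dBL_le (fun f => ((n.+1%:R)^-1 * \sum_(i < n.+1) f (x n i t))%:E)
            (fun f => \int[rho t]_y (f y)%:E)%E e) ->
  (* E[mu^N_t] -> E[mu_t] on a full-measure set A_E *)
  (exists AE : set R, measurable AE /\ AE `<=` `[0, T] /\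
     lebesgue_measure (`[0, T] `\` AE) = 0%E /\
     forall t : R, AE t ->
       (fun k => let n := sigma k in
          ((n.+1%:R)^-1 * \sum_(i < n.+1) enorm (v n i t) ^+ 2)%:E)
         @ \oo --> (\int[mu t]_z (enorm z.2 ^+ 2)%:E)%E) ->
  (* conclusion: local mass preservation *)
  forall (C : set 'rV[R]_d) (t0 t : R),
    measurable (C : set (Rd R d)) -> 0 <= t0 -> t0 <= t -> t <= T ->
    (rho t0 C <=
       rho t (setMsum (closure C)
                [set (t - t0) *: b | b in closure (@eball R d M)]))%E.
Proof.
move=> _ _ _ x_cont _ _ x_der _ _ _ _ _ supp _ _ _ _ marg _ rho_unif _
  C t0 t C_meas t0_ge0 t0_le_t t_le_T.
have [->|C0] := eqVneq C set0; first by rewrite measure0 measure_ge0.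
have {}C0 : C !=set0 by exact/set0P.
have in_time s : t0 <= s <= t -> 0 <= s <= T.
  by case/andP=> t0s st; rewrite (le_trans t0_ge0 t0s) (le_trans st t_le_T).
have speed n i s : t0 <= s <= t -> enorm (v n i s) < M.
  by move/in_time/(supp n i s) => [].
have M_gt0 : 0 < M.
  by apply: le_lt_trans (speed 0%N ord0 t0 _); rewrite ?enorm_ge0 ?lexx.
have rho_fin : (rho t setT < +oo)%E.
  by rewrite marg // setXTT probability_setT ltry.
pose S := scaled_ball (d := d) M (t - t0).
have S0 : S !=set0 by exists 0; exact: scaled_ball0.
have S_compact : compact S by exact: scaled_ball_compact.
apply: (mass_le_Msum S0 S_compact rho_fin _ C0 C_meas) => F G BF BG F_le_G.
apply: (empirical_le_limit rho_unif _ _ BF BG).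
- by rewrite t0_ge0 (le_trans t0_le_t t_le_T).
- by rewrite (le_trans t0_ge0 t0_le_t) t_le_T.
move=> n i; rewrite -[x n i t](subrK (x n i t0)) addrC.
apply: F_le_G; apply: (displacement_in_ball (v := v n i)) => //.
- by move=> s s_gt0; case: (x_der n i s s_gt0).
- by move=> s; exact: speed.
Qed.
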